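(* For every integer $n\ge 2$, the $n$-abomination $\mathbb{X}_n$ is an Esakia space.
   Context: $\mathbb{N}=\{0,1,2,\dots\}$. Fix an integer $n\ge 2$ and put $N=2^{n+1}-1$. Let $T_n$ be the set of triples $\langle k_1,k_2,k_3\rangle$ of pairwise distinct natural numbers $\le N$, with a fixed enumeration $T_n=\{s_0,\dots,s_t\}$. Let $U_n$ be a set of pairwise distinct elements $a_m,b_m$ ($m\in\mathbb{N}$) and $c_{m,k},d_{m,k},e^a_{m,k},e^b_{m,k}$ ($m\in\mathbb{N}$, $0\le k\le N$). Define $x\prec y$ on $U_n$ iff one of: (1) $x=a_m$ and $y\in\{c_{m,k_1},c_{m,k_2}\}$, where $s_j=\langle k_1,k_2,k_3\rangle$ with $j\equiv m \bmod (t+1)$; (2) $x=b_m$ and $y\in\{c_{m,k_1},c_{m,k_3}\}$, with $s_j$ as in (1); (3) $m\ge1$, $x=c_{m,k}$, and either $y=e^a_{m-1,j}$ with $j\ne k$, or $y=e^b_{m-1,i}$ for any $i\le N$; (4) $x=d_{m,k}$ and $y=c_{m,j}$ with $j\neq k$; (5) $x=e^a_{m,k}$ and either $y=a_m$ or $y=d_{m,j}$ with $j\ne k$; (6) $x=e^b_{m,k}$ and either $y=b_m$ or $y=d_{m,j}$ with $j\ne k$. Let $\le$ be the reflexive transitive closure of $\prec$ (a partial order on $U_n$). The root compactification of a poset is obtained by adding a new least element $\bot$ and declaring a set $U$ open iff $\bot\notin U$ or $U$ is cofinite. The $n$-abomination $\mathbb{X}_n$ is the root compactification of $\langle U_n,\le\rangle$.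 An Esakia space is a compact ordered topological space in which ${\downarrow}U$ is clopen for every clopen $U$ and whenever $x\not\le y$ there is a clopen upset containing $x$ but not $y$. *)

From Stdlib Require Import Relations.
From HB Require Import structures.
From mathcomp Require Import all_boot all_order.
From mathcomp Require Import boolp classical_sets cardinality topology.
Set Implicit Arguments. Unset Strict Implicit. Unset Printing Implicit Defensive.
Local Open Scope classical_set_scope.

Section Esakia.
Variable X : topologicalType.
Variable le : X -> X -> Prop.

Definition upset (U : set X) := forall x y, U x -> le x y -> U y.
Definition downclosure (U : set X) : set X := [set x | exists2 y, U y & le x y].

Definition is_partial_order :=
  [/\ forall x, le x x,
      forall x y z, le x y -> le y z -> le x z &
      forall x y, le x y -> le y x -> x = y].

Definition esakia_space :=
  [/\ is_partial_order,
      compact [set: X],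
      forall U : set X, clopen U -> clopen (downclosure U) &
      forall x y, ~ le x y ->
        exists U : set X, [/\ clopen U, upset U, U x & ~ U y]].
End Esakia.

(* carrier: option P, with None playing the role of the new least element bot *)
Definition rootc (P : Type) := option P.

Section RootCompactification.
Variable P : Type.

HB.instance Definition _ := gen_eqMixin (rootc P).
HB.instance Definition _ := gen_choiceMixin (rootc P).

Definition rootc_open (U : set (rootc P)) : Prop :=
  ~ U None \/ finite_set (~` U).

Lemma rootc_openT : rootc_open setT.
Proof. by right; rewrite setCT; exact: finite_set0. Qed.

Lemma rootc_openI : setI_closed rootc_open.
Proof.
move=> A B [nA|fA] [nB|fB].
- by left=> -[].
- by left=> -[].
- by left=> -[].
- by right; rewrite setCI finite_setU.
Qed.

Lemma rootc_open_bigU (I : Type) (f : I -> set (rootc P)) :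
  (forall i, rootc_open (f i)) -> rootc_open (\bigcup_i f i).
Proof.
move=> hf; have [[i _ fi]|nU] := pselect ((\bigcup_i f i) None).
- case: (hf i) => [//|fin]; right; apply: sub_finite_set fin.
  by apply: subsetC => x fx; exists i.
- by left.
Qed.

HB.instance Definition _ := isOpenTopological.Build (rootc P)
  rootc_openT rootc_openI rootc_open_bigU.

Variable leP : P -> P -> Prop.
Definition rootc_le (x y : rootc P) : Prop :=
  match x, y with
  | None, _ => True
  | Some _, None => False
  | Some a, Some b => leP a b
  end.
End RootCompactification.

(* indices k with 0 <= k <= N = 2^(n+1)-1, i.e. k : 'I_(2^(n+1)) *)
Definition Nbound (n : nat) := (2 ^ n.+1).-1.

Inductive Uel (n : nat) : Type :=
  | Ua of nat
  | Ub of nat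
  | Uc of nat & 'I_(2 ^ n.+1)
  | Ud of nat & 'I_(2 ^ n.+1)
  | Uea of nat & 'I_(2 ^ n.+1)
  | Ueb of nat & 'I_(2 ^ n.+1).

Definition in_Tn (n : nat) (t : nat * nat * nat) : bool :=
  let: (k1, k2, k3) := t in
  [&& k1 <= Nbound n, k2 <= Nbound n, k3 <= Nbound n,
      k1 != k2, k1 != k3 & k2 != k3].

(* an enumeration s_0, ..., s_t of T_n (t + 1 = size s) *)
Definition enumeration_Tn (n : nat) (s : seq (nat * nat * nat)) : Prop :=
  uniq s /\ forall x, (x \in s) = in_Tn n x.

Section Order.
Variables (n : nat) (s : seq (nat * nat * nat)).

Definition sj (m : nat) := nth (0, 0, 0) s (m %% size s).

Definition prec (x y : Uel n) : Prop :=
  match x, y with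
  | Ua m, Uc m' k => m' = m /\
      let: (k1, k2, _) := sj m in (val k = k1 \/ val k = k2)
  | Ub m, Uc m' k => m' = m /\
      let: (k1, _, k3) := sj m in (val k = k1 \/ val k = k3)
  | Uc m k, Uea m' j => 1 <= m /\ m' = m.-1 /\ j <> k
  | Uc m k, Ueb m' i => 1 <= m /\ m' = m.-1
  | Ud m k, Uc m' j => m' = m /\ j <> k
  | Uea m k, Ua m' => m' = m
  | Uea m k, Ud m' j => m' = m /\ j <> k
  | Ueb m k, Ub m' => m' = m
  | Ueb m k, Ud m' j => m' = m /\ j <> k
  | _, _ => False
  end.

Definition Ule : Uel n -> Uel n -> Prop := clos_refl_trans (Uel n) prec.
End Order.

Definition abomination (n : nat) := rootc (Uel n).
Definition abomination_le (n : nat) (s : seq (nat * nat * nat)) :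
  abomination n -> abomination n -> Prop := rootc_le (@Ule n s).

(* Both the topology and the order of a root compactification are controlled
   by finiteness.  A set is clopen iff it is finite and avoids the root, or is
   cofinite and contains it.  Hence the root compactification of a poset in
   which every principal upset is finite and every principal downset is
   cofinite is an Esakia space: a principal upset of a point separates it from
   anything it is not below, and the down-closure of a nonempty set contains
   the root and is cofinite.

   For U_n both conditions come from the levels m of the elements.  Going up
   along the covering relation strictly decreases the rank 4m + 1 (for c),
   4m + 2 (for a, b, d), 4m + 3 (for e), so an upset of a point has bounded
   level.  Going down, c_{m+1,k'} < e^b_{m,i} < d_{m,j} < c_{m,k}, and every
   point lies below some c of its own level and above some c of the next one;
   hence any point two levels deeper than u lies below u. *)

From Stdlib Require Import Relations Lia.
From mathcomp Require Import all_boot all_order.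
From mathcomp Require Import boolp classical_sets cardinality topology zify.
Set Implicit Arguments. Unset Strict Implicit. Unset Printing Implicit Defensive.
Local Open Scope classical_set_scope.

Section RootCompactificationTopology.
Variable P : Type.
Implicit Types U : set (rootc P).

Lemma rootc_open_cofinite U : open U -> U None -> finite_set (~` U).
Proof. by case. Qed.

Lemma rootc_clopen_finite U : ~ U None -> finite_set U -> clopen U.
Proof.
by move=> UN finU; split; [left | rewrite -openC; right; rewrite setCK].
Qed.

Lemma rootc_clopen_cofinite U : U None -> finite_set (~` U) -> clopen U.
Proof. by move=> UN finCU; split; [right | rewrite -openC; left]. Qed.

Lemma rootc_compact : compact [set: rootc P].
Proof.
move=> F PF _; have [clN|nclN] := pselect (cluster F None).
  by exists None.
have [A [B [FA NB AB0]]] : exists A B, [/\ F A, nbhs (None : rootc P) B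
    & ~ (A `&` B !=set0)].
  apply: contrapT => nAB; apply: nclN => A B FA NB.
  by apply: contrapT => AB0; apply: nAB; exists A, B.
rewrite nbhsE in NB; have [C [oC CN] CB] := NB.
have FCC : F (~` C).
  by apply: filterS FA => x Ax Cx; apply: AB0; exists x; split => //; exact: CB.
have [x [_ clx]] := finite_compact (rootc_open_cofinite oC CN) PF FCC.
by exists x.
Qed.
End RootCompactificationTopology.

Section RootCompactificationEsakia.
Variables (P : Type) (le : P -> P -> Prop).
Hypothesis le_order : Relation_Definitions.order P le.
Hypothesis up_finite : forall a, finite_set [set x | le a x].
Hypothesis down_cofinite : forall a, finite_set [set x | ~ le x a].

Local Notation rle := (rootc_le le).

Lemma rootc_le_refl (x : rootc P) : rle x x.
Proof. by case: x => //=; exact: (ord_refl _ _ le_order). Qed.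

Lemma rootc_le_trans (x y z : rootc P) : rle x y -> rle y z -> rle x z.
Proof.
by case: x y z => [x|] [y|] [z|] //= ?; apply: (ord_trans _ _ le_order).
Qed.

Lemma rootc_le_partial_order : is_partial_order rle.
Proof.
split; [exact: rootc_le_refl | exact: rootc_le_trans |].
by case=> [x|] [y|] //= xy yx; rewrite (ord_antisym _ _ le_order _ _ xy yx).
Qed.

Lemma rootc_downclosure_clopen (U : set (rootc P)) :
  clopen U -> clopen (downclosure rle U).
Proof.
move=> [oU _]; have [[y Uy]|U0] := pselect (U !=set0); last first.
  suff -> : downclosure rle U = set0 by exact: clopen0.
  by apply/seteqP; split => // x [z Uz _]; apply: U0; exists z.
apply: rootc_clopen_cofinite; first by exists y.
case: y Uy => [u|] Uy.
- apply: sub_finite_set (finite_image Some (down_cofinite u)).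
  case=> [x|] nDx; last by exfalso; apply: nDx; exists (Some u).
  by exists x => // xu; apply: nDx; exists (Some u).
- apply: sub_finite_set (rootc_open_cofinite oU Uy) => x nDx Ux.
  by apply: nDx; exists x => //; apply: rootc_le_refl.
Qed.

Lemma rootc_priestley (x y : rootc P) : ~ rle x y ->
  exists V : set (rootc P), [/\ clopen V, upset rle V, V x & ~ V y].
Proof.
move=> nxy; exists (rle x); split => //.
- case: x nxy => [a|] //= _; apply: rootc_clopen_finite => //.
  apply: sub_finite_set (finite_image Some (up_finite a)).
  by case=> [z|] //= az; exists z.
- by move=> z w; apply: rootc_le_trans.
- exact: rootc_le_refl.
Qed.

Theorem rootc_esakia : esakia_space rle.
Proof.
split; [exact: rootc_le_partial_order | exact: rootc_compact | |].
- exact: rootc_downclosure_clopen.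
- exact: rootc_priestley.
Qed.
End RootCompactificationEsakia.

Section Abomination.
Variables (n : nat) (s : seq (nat * nat * nat)).
Implicit Types (a x y u : Uel n) (m : nat).

Definition level x : nat :=
  match x with
  | Ua m | Ub m => m
  | Uc m _ | Ud m _ | Uea m _ | Ueb m _ => m
  end.

Definition rank x : nat :=
  match x with
  | Uc m _ => 4 * m + 1
  | Ua m | Ub m | Ud m _ => 4 * m + 2
  | Uea m _ | Ueb m _ => 4 * m + 3
  end.

Lemma level_le_rank x : level x <= rank x.
Proof. case: x => /= *; lia. Qed.

Lemma prec_rank x y : prec s x y -> rank y < rank x.
Proof.
case: x => [m|m|m k|m k|m k|m k];
  case: y => [m'|m'|m' k'|m' k'|m' k'|m' k'] //=;
  by move=> h; decompose [and] h; lia.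
Qed.

Lemma Ule_rank x y : Ule s x y -> x = y \/ rank y < rank x.
Proof.
elim=> [a b /prec_rank|a|a b c _ [->|ab] _ [<-|bc]]; auto.
by right; apply: ltn_trans bc ab.
Qed.

Lemma Ule_order : Relation_Definitions.order (Uel n) (Ule s).
Proof.
split; [exact: rt_refl | exact: rt_trans |].
move=> x y /Ule_rank[-> //|xy] /Ule_rank[-> //|yx].
by have := ltn_trans xy yx; rewrite ltnn.
Qed.

Definition index0 : 'I_(2 ^ n.+1) := Ordinal (expn_gt0 2 n.+1).

Definition Uel_of_code (c : nat * 'I_6 * 'I_(2 ^ n.+1)) : Uel n :=
  let: (m, tag, k) := c in
  match val tag with
  | 0 => Ua n m | 1 => Ub n m | 2 => Uc m k | 3 => Ud m k | 4 => Uea m k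
  | _ => Ueb m k
  end.

Lemma finite_level_le L : finite_set [set x | level x <= L].
Proof.
have fin_codes := finite_setX
  (finite_setX (finite_II L.+1) (@finite_finset 'I_6 setT))
  (@finite_finset 'I_(2 ^ n.+1) setT).
apply: sub_finite_set (finite_image Uel_of_code fin_codes).
case=> [m|m|m k|m k|m k|m k] /= xL.
- by exists (m, @Ordinal 6 0 isT, index0).
- by exists (m, @Ordinal 6 1 isT, index0).
- by exists (m, @Ordinal 6 2 isT, k).
- by exists (m, @Ordinal 6 3 isT, k).
- by exists (m, @Ordinal 6 4 isT, k).
- by exists (m, @Ordinal 6 5 isT, k).
Qed.

Lemma Ule_up_finite a : finite_set [set x | Ule s a x].
Proof.
apply: sub_finite_set (finite_level_le (rank a)) => x /Ule_rank[<-|xa] /=.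
  exact: level_le_rank.
by apply: leq_trans (level_le_rank x) (ltnW xa).
Qed.

Lemma exists_other_index (k : 'I_(2 ^ n.+1)) : exists j, j <> k.
Proof.
have two_le : 1 < 2 ^ n.+1 by rewrite -{1}(expn0 2) ltn_exp2l.
have [k0|k_neq0] := eqVneq (val k) 0.
- by exists (Ordinal two_le) => /(congr1 val) /=; rewrite k0.
- by exists index0 => /(congr1 val) /= /esym; apply/eqP.
Qed.

Lemma Ule_Uc_succ m (k k' : 'I_(2 ^ n.+1)) : Ule s (Uc m.+1 k') (Uc m k).
Proof.
have [j jk] := exists_other_index k; have [i ij] := exists_other_index j.
apply: (rt_trans _ _ _ (Ueb m i)); first by apply: rt_step.
by apply: (rt_trans _ _ _ (Ud m j)); apply: rt_step; split=> // /esym.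
Qed.

Lemma Ule_Uc_lt m m' (k k' : 'I_(2 ^ n.+1)) :
  m < m' -> Ule s (Uc m' k') (Uc m k).
Proof.
elim: m' k' => // m' IH k'; rewrite ltnS leq_eqVlt => /predU1P[<-|mm'].
  exact: Ule_Uc_succ.
by apply: rt_trans (Ule_Uc_succ _ index0 _) (IH _ mm').
Qed.

Lemma Uc_succ_Ule u : exists k, Ule s (Uc (level u).+1 k) u.
Proof.
case: u => [m|m|m k|m k|m k|m k] /=.
- have [i i_neq0] := exists_other_index index0; exists index0.
  by apply: (rt_trans _ _ _ (Uea m i)); apply: rt_step.
- by exists index0; apply: (rt_trans _ _ _ (Ueb m index0)); apply: rt_step.
- by exists index0; apply: Ule_Uc_succ.
- have [i ik] := exists_other_index k; exists index0.
  apply: (rt_trans _ _ _ (Ueb m i)); apply: rt_step => //=.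
  by split=> //; apply: nesym.
- have [j jk] := exists_other_index k; exists j.
  by apply: rt_step => /=; do 2!split=> //; apply: nesym.
- by exists index0; apply: rt_step.
Qed.

Hypothesis s_enum : enumeration_Tn n s.

Lemma sj_fst_lt m : (sj s m).1.1 < 2 ^ n.+1.
Proof.
have [s0|s_gt0] := posnP (size s).
  by rewrite /sj (size0nil s0) nth_nil expn_gt0.
have : sj s m \in s by rewrite mem_nth // ltn_pmod.
rewrite (proj2 s_enum) /Nbound; case: (sj s m) => [[k1 k2] k3] /and3P[+ _ _] /=.
by rewrite -ltnS prednK ?expn_gt0.
Qed.

Lemma Ua_Ub_prec_Uc m :
  exists k, prec s (Ua n m) (Uc m k) /\ prec s (Ub n m) (Uc m k).
Proof.
have := sj_fst_lt m; rewrite /prec; case: (sj s m) => [[k1 k2] k3] /= k1_lt.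
by exists (Ordinal k1_lt); split; split=> //; left.
Qed.

Lemma Ule_Uc_level y : exists k, Ule s y (Uc (level y) k).
Proof.
have [k0 [a_k0 b_k0]] := Ua_Ub_prec_Uc (level y).
case: y k0 a_k0 b_k0 => [m|m|m k|m k|m k|m k] /= k0 a_k0 b_k0.
- by exists k0; apply: rt_step.
- by exists k0; apply: rt_step.
- by exists k; apply: rt_refl.
- by have [j jk] := exists_other_index k; exists j; apply: rt_step.
- by exists k0; apply: (rt_trans _ _ _ (Ua n m)); apply: rt_step.
- by exists k0; apply: (rt_trans _ _ _ (Ub n m)); apply: rt_step.
Qed.

Lemma Ule_Uc_of_lt y m (k : 'I_(2 ^ n.+1)) : m < level y -> Ule s y (Uc m k).
Proof.
move=> my; have [k' yk'] := Ule_Uc_level y.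
apply: rt_trans yk' (Ule_Uc_lt _ _ my).
Qed.

Lemma Ule_of_level_gt u y : (level u).+1 < level y -> Ule s y u.
Proof.
move=> uy; have [k ku] := Uc_succ_Ule u.
apply: rt_trans (Ule_Uc_of_lt k uy) ku.
Qed.

Lemma Ule_down_cofinite a : finite_set [set x | ~ Ule s x a].
Proof.
apply: sub_finite_set (finite_level_le (level a).+1) => x /= nxa.
by rewrite leqNgt; apply/negP => /Ule_of_level_gt.
Qed.
End Abomination.

Theorem mainTheorem4 (n : nat) (s : seq (nat * nat * nat)) :
  2 <= n -> enumeration_Tn n s ->
  esakia_space (@abomination_le n s).
Proof.
move=> _ s_enum; apply: rootc_esakia.
- exact: Ule_order.
- exact: Ule_up_finite.
- exact: Ule_down_cofinite.
Qed.
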